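(* Consider the house allocation model, i.e., an FEE problem with $|O|=|I|$ and $\omega_{i,o}=1/|I|$ for all $i\in I$, $o\in O$, with arbitrary (possibly non-strict) complete transitive preferences. Every FTTC mechanism satisfying stepwise equal-endowment equal treatment produces an assignment $p$ that is sd-efficient and envy-free (for all $i,j\in I$, $p_i\succsim^{sd}_i p_j$).
   Context: Fractional endowment exchange (FEE) problem: a tuple $(I,O,\succsim_I,\omega)$ where $I$ is a finite set of agents, $O$ a finite set of objects, each agent $i$ has a complete and transitive (possibly non-strict) preference relation $\succsim_i$ over $O$ with asymmetric part $\succ_i$ and symmetric part $\sim_i$, and $\omega=(\omega_{i,o})_{i\in I,o\in O}$ is an endowment matrix with $\omega_{i,o}\in[0,1]$, $\sum_{o\in O}\omega_{i,o}\le 1$ for each $i$, and $q_o=\sum_{i\in I}\omega_{i,o}$ an integer for each $o$. An assignment is a nonnegative matrix $p=(p_{i,o})$ with $\sum_i p_{i,o}\le q_o$ for all $o$ and $\sum_o p_{i,o}\le 1$ for all $i$; $p_i=(p_{i,o})_{o\in O}$ is $i$'s lottery; $\omega_i=(\omega_{i,o})_{o\in O}$. Stochastic dominance: for $l,l'\in\mathbb R^{O}_+$, $l\succsim^{sd}_i l'$ if $\sum_{o'\succsim_i o}l_{o'}\ge\sum_{o'\succsim_i o}l'_{o'}$ for all $o\in O$, strictly ($\succ^{sd}_i$) if some inequality is strict. $p$ strictly stochastically dominates $p'$ if $p_i\succsim^{sd}_ip'_i$ for all $i$ and $p_j\succ^{sd}_jp'_j$ for some $j$; $p$ is sd-efficient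 if no assignment strictly stochastically dominates it. FTTC (Fractional Top Trading Cycle) on the full preference domain. Initialize $\omega(0)=\omega$, $p(0)=0$, $O(0)=O$. At step $d\ge1$ (with $O(d-1)\ne\emptyset$): (i) Labeling. Put $T_0=O(d-1)$. For $k=1,2,\dots$: let $L_k$ be the set of agents $i\notin L_1\cup\dots\cup L_{k-1}$ for which there exist $o\in T_{k-1}$ and $o'\in O\setminus(T_0\cup\dots\cup T_{k-1})$ with $p_{i,o'}(d-1)>0$ and $o\sim_i o'$; for $i\in L_k$ let $\tilde O_i(d-1)$ be the set of all such $o'$ for this $i$, and let $T_k=\bigcup_{i\in L_k}\tilde O_i(d-1)$. Stop at the first $k$ with $L_k=\emptyset$. Set $L(d-1)=\bigcup_k L_k$, $\tilde O(d-1)=\bigcup_{k\ge1}T_k$, $\overline{O}(d-1)=O(d-1)\cup\tilde O(d-1)$, and $\tilde O_i(d-1)=\emptyset$ for $i\notin L(d-1)$. (ii) Pointing. The active agents are $I(d-1)=L(d-1)\cup\{i\in I:\sum_o\omega_{i,o}(d-1)>0\}$. For $i\in I(d-1)$ let $B_i$ be the set of $\succsim_i$-maximal elements of $\overline{O}(d-1)$, let $k_i$ be the least $k\ge0$ with $B_i\cap T_k\ne\emptyset$, and let $A_i(d)=B_i\cap T_{k_i}$. (iii) Trading. The mechanism chooses (possibly depending on the history): a ratio matrix $\lambda(d)=(\lambda_{i,o}(d))_{i\in I(d-1),o\in\overline{O}(d-1)}$, nonnegative, with $\sum_{i\in I(d-1)}\lambda_{i,o}(d)=1$ for each $o\in\overline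 O(d-1)$, $\lambda_{i,o}(d)>0$ only if $\omega_{i,o}(d-1)>0$ (for $o\in O(d-1)$) and only if $o\in\tilde O_i(d-1)$ (for $o\in\tilde O(d-1)$); a quota matrix $\beta(d)$ on $I(d-1)\times O(d-1)$ with $0\le\beta_{i,o}(d)\le\omega_{i,o}(d-1)$; a division matrix $\gamma(d)$ on $I(d-1)\times\overline O(d-1)$, nonnegative, with $\sum_o\gamma_{i,o}(d)=1$ and $\gamma_{i,o}(d)>0$ only if $o\in A_i(d)$. Let $x^*(d)=(x^*_a(d))_{a\in I(d-1)\cup\overline O(d-1)}$ be the maximum (componentwise largest) nonnegative solution of $x_o=\sum_{i\in I(d-1)}\gamma_{i,o}(d)x_i$ for all $o\in\overline O(d-1)$ and $x_i=\sum_{o\in\overline O(d-1)}\lambda_{i,o}(d)x_o$ for all $i\in I(d-1)$, subject to $\lambda_{i,o}(d)x_o\le\beta_{i,o}(d)$ for $o\in O(d-1)$ and $\lambda_{i,o}(d)x_o\le p_{i,o}(d-1)$ for $o\in\tilde O(d-1)$. For $i\in I(d-1)$: $\omega_{i,o}(d)=\omega_{i,o}(d-1)-\lambda_{i,o}(d)x^*_o(d)$ if $o\in O(d-1)$ and $0$ otherwise; $p_{i,o}(d)=p_{i,o}(d-1)-\mathbf 1[o\in\tilde O_i(d-1)]\lambda_{i,o}(d)x^*_o(d)+\gamma_{i,o}(d)x^*_i(d)$ (with $\gamma_{i,o}(d)=0$ for $o\notin\overline O(d-1)$). For $i\notin I(d-1)$, $\omega_i(d)=\omega_i(d-1)$,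 $p_i(d)=p_i(d-1)$. Let $O(d)=\{o\in O(d-1):\sum_i\omega_{i,o}(d)>0\}$. If $O(d)=\emptyset$ stop and output $p(d)$; otherwise go to step $d+1$. (Standing assumption: the maximum solution exists at each step and the procedure ends after finitely many steps.) An FTTC mechanism is specified by a rule choosing $\lambda(d),\beta(d),\gamma(d)$ at every step. Stepwise equal-endowment equal treatment (stepwise EEET): at every step $d$, for all $i,j\in I(d-1)$, if $\omega_i(d-1)=\omega_j(d-1)$ then $\lambda_{i,o}(d)=\lambda_{j,o}(d)$ for all $o\in O(d-1)$. *)

From mathcomp Require Import all_boot all_order all_algebra.
From mathcomp Require Import reals.

Set Implicit Arguments.
Unset Strict Implicit.
Unset Printing Implicit Defensive.

Import Order.TTheory GRing.Theory Num.Theory.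
Local Open Scope ring_scope.

Section FEE.

Variables (R : realType) (I O : finType).
(* pref i a b  means  a ≿_i b *)
Variable pref : I -> rel O.

Definition complete_pref (r : rel O) := forall a b, r a b || r b a.
Definition transitive_pref (r : rel O) := forall a b c, r a b -> r b c -> r a c.

Definition indiff (i : I) (a b : O) := pref i a b && pref i b a.

Definition upper_sum (i : I) (l : O -> R) (o : O) := \sum_(o' | pref i o' o) l o'.

Definition sd_geq (i : I) (l l' : O -> R) := forall o, upper_sum i l' o <= upper_sum i l o.
Definition sd_gt (i : I) (l l' : O -> R) :=
  sd_geq i l l' /\ exists o, upper_sum i l' o < upper_sum i l o.

Definition is_assignment (q : O -> R) (P : I -> O -> R) :=
  (forall i o, 0 <= P i o) /\ (forall o, \sum_i P i o <= q o) /\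
  (forall i, \sum_o P i o <= 1).

Definition sd_efficient (q : O -> R) (P : I -> O -> R) :=
  ~ exists P' : I -> O -> R, is_assignment q P' /\
      (forall i, sd_geq i (P' i) (P i)) /\ exists j, sd_gt j (P' j) (P j).

Definition envy_free (P : I -> O -> R) := forall i j, sd_geq i (P i) (P j).

Section Step.
(* Oc = O(d-1), om = omega(d-1), P = p(d-1) *)
Variables (Oc : {set O}) (om P : I -> O -> R).

Record lab_state := LabState {
  lab_L : {set I};      (* L_1 ∪ ... ∪ L_k *)
  lab_T : {set O};      (* T_0 ∪ ... ∪ T_k *)
  lab_last : {set O} }.

(* L_{k+1}, computed from the state after layer k *)
Definition new_layer (s : lab_state) : {set I} :=
  [set i | (i \notin lab_L s) &&
     [exists o in lab_last s, [exists o' in ~: lab_T s, (0 < P i o') && indiff i o o']]].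

Definition new_objs (i : I) (s : lab_state) : {set O} :=
  [set o' | [&& o' \notin lab_T s, 0 < P i o' & [exists o in lab_last s, indiff i o o']]].

Definition new_T (s : lab_state) : {set O} :=
  \bigcup_(i in new_layer s) new_objs i s.

Fixpoint lab (k : nat) : lab_state :=
  match k with
  | 0 => LabState set0 Oc Oc
  | k'.+1 => let s := lab k' in
             LabState (lab_L s :|: new_layer s) (lab_T s :|: new_T s) (new_T s)
  end.

(* enough iterations: every nonempty layer L_k contains a new agent *)
Definition nlab := #|I|.+1.

Definition Tk (k : nat) : {set O} := lab_last (lab k).
Definition Lset : {set I} := lab_L (lab nlab).
Definition Obar : {set O} := lab_T (lab nlab).
Definition Otil : {set O} := Obar :\: Oc.
Definition Otil_i (i : I) : {set O} :=
  \bigcup_(k < nlab | i \in new_layer (lab k)) new_objs i (lab k).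

Definition Iact : {set I} := Lset :|: [set i | 0 < \sum_o om i o].
Definition Best (i : I) : {set O} := [set o in Obar | [forall o' in Obar, pref i o o']].
Definition Aset (i : I) : {set O} :=
  [set o in Best i | [exists k : 'I_nlab.+1,
      (o \in Tk k) && [forall k' : 'I_nlab.+1, (k' < k)%N ==> [disjoint Best i & Tk k']]]].

Variables (lam beta gam : I -> O -> R).

Definition ratio_ok :=
  (forall i o, i \in Iact -> o \in Obar -> 0 <= lam i o) /\
  (forall o, o \in Obar -> \sum_(i in Iact) lam i o = 1) /\
  (forall i o, i \in Iact -> o \in Oc -> 0 < lam i o -> 0 < om i o) /\
  (forall i o, i \in Iact -> o \in Otil -> 0 < lam i o -> o \in Otil_i i).

Definition quota_ok :=
  forall i o, i \in Iact -> o \in Oc -> 0 <= beta i o /\ beta i o <= om i o.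

Definition division_ok :=
  (forall i o, i \in Iact -> o \in Obar -> 0 <= gam i o) /\
  (forall i, i \in Iact -> \sum_(o in Obar) gam i o = 1) /\
  (forall i o, i \in Iact -> o \in Obar -> 0 < gam i o -> o \in Aset i).

Definition feasible (x : I -> R) (y : O -> R) :=
  (forall i, i \in Iact -> 0 <= x i) /\
  (forall o, o \in Obar -> 0 <= y o) /\
  (forall o, o \in Obar -> y o = \sum_(i in Iact) gam i o * x i) /\
  (forall i, i \in Iact -> x i = \sum_(o in Obar) lam i o * y o) /\
  (forall i o, i \in Iact -> o \in Oc -> lam i o * y o <= beta i o) /\
  (forall i o, i \in Iact -> o \in Otil -> lam i o * y o <= P i o).

Definition max_solution (xI : I -> R) (xO : O -> R) :=
  feasible xI xO /\
  forall x y, feasible x y ->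
    (forall i, i \in Iact -> x i <= xI i) /\ (forall o, o \in Obar -> y o <= xO o).

Definition fttc_step (xI : I -> R) (xO : O -> R) (om' P' : I -> O -> R) :=
  ratio_ok /\ quota_ok /\ division_ok /\ max_solution xI xO /\
      (forall i o, om' i o =
         if i \in Iact then (if o \in Oc then om i o - lam i o * xO o else 0)
         else om i o) /\
      (forall i o, P' i o =
         if i \in Iact then
           P i o - (if o \in Otil_i i then lam i o * xO o else 0)
                 + (if o \in Obar then gam i o * xI i else 0)
         else P i o).

Definition EEET_step :=
  forall i j, i \in Iact -> j \in Iact -> om i =1 om j ->
    forall o, o \in Oc -> lam i o = lam j o.

End Step.

Fixpoint Oset (om : nat -> I -> O -> R) (d : nat) : {set O} :=
  match d with
  | 0 => setT
  | d'.+1 => [set o in Oset om d' | 0 < \sum_i om d i o]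
  end.

(* A terminating run of an FTTC mechanism: states omega(d), p(d) for d <= D, and the
   choices lam(d), beta(d), gam(d) with maximum solution (xI(d), xO(d)) of step d >= 1;
   D is the first step with O(D) empty, and p(D) is the output. *)
Definition fttc_run (om p : nat -> I -> O -> R) (lam beta gam : nat -> I -> O -> R)
    (xI : nat -> I -> R) (xO : nat -> O -> R) (D : nat) :=
  [/\ (forall i o, p 0%N i o = 0),
      (forall d, (d < D)%N -> Oset om d != set0),
      Oset om D = set0 &
      (forall d, (d < D)%N ->
         fttc_step (Oset om d) (om d) (p d) (lam d.+1) (beta d.+1) (gam d.+1)
                   (xI d.+1) (xO d.+1) (om d.+1) (p d.+1))].

Definition run_EEET (om p : nat -> I -> O -> R) (lam : nat -> I -> O -> R) (D : nat) :=
  forall d, (d < D)%N -> EEET_step (Oset om d) (om d) (p d) (lam d.+1).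

End FEE.

From mathcomp Require Import all_boot all_order all_algebra.
From mathcomp Require Import reals lra.
Import Order.TTheory GRing.Theory Num.Theory.
Local Open Scope ring_scope.
Set Implicit Arguments. Unset Strict Implicit. Unset Printing Implicit Defensive.

(* 1. Labeling (one step): the labeled object sets only grow, the labeling has
      stopped after |I|+1 rounds, and an object is labeled whenever a labeled
      agent holds it and is indifferent between it and a labeled object.
   2. Market invariant: along the run every agent weakly prefers each object she
      holds to every object of the current market Obar(d); hence an object she
      holds outside Obar(d) is strictly preferred to all of Obar(d), and the
      markets Obar(d) decrease.  Holdings outside Obar(d) are frozen forever.
   3. Bookkeeping: endowments stay nonnegative and vanish off O(d); by EEET all
      endowments stay equal, so all agents are active at every step and use the
      same ratios, hence they gain equal amounts of new mass at every step; and
      the total amount of every object (held plus endowed) is conserved.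
   4. Efficiency: for an agent i and a step d, the objects i prefers strictly
      to all of Obar(d) carry exactly the supply of the objects already off the
      market; a dominating assignment must coincide with p(D) on these sets,
      and every upper contour set of i is covered by one of them.
   5. Envy-freeness: while the market meets the upper contour set S of agent a
      she gains nothing outside S; afterwards all agents gain equal mass, and
      their total masses are equal. *)

Section Labeling.
Variables (R : realType) (I O : finType) (pref : I -> rel O).
Variables (Oc : {set O}) (P : I -> O -> R).

Local Notation lab := (lab pref Oc P).
Local Notation Tk := (Tk pref Oc P).
Local Notation new_layer := (new_layer pref P).
Local Notation new_objs := (new_objs pref P).
Local Notation new_T := (new_T pref P).
Local Notation Obar := (Obar pref Oc P).

Lemma labT_mono k k' : (k <= k')%N -> lab_T (lab k) \subset lab_T (lab k').
Proof.
move=> /subnK <-; elim: (k' - k)%N => [|m IH] //=.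
exact: subset_trans IH (subsetUl _ _).
Qed.

Lemma Tk_sub_labT k : Tk k \subset lab_T (lab k).
Proof. by case: k => [|k] //=; rewrite /Tk /= subsetUr. Qed.

Lemma labT_sub_Obar k : (k <= nlab I)%N -> lab_T (lab k) \subset Obar.
Proof. exact: labT_mono. Qed.

Lemma Oc_sub_Obar : Oc \subset Obar.
Proof. exact: (labT_sub_Obar (k := 0)). Qed.

Lemma newT_sub_Obar k : (k < nlab I)%N -> new_T (lab k) \subset Obar.
Proof. by move=> hk; apply: subset_trans (Tk_sub_labT k.+1) (labT_sub_Obar hk). Qed.

Lemma mem_labT k o : o \in lab_T (lab k) -> exists2 m, (m <= k)%N & o \in Tk m.
Proof.
elim: k => [|k IH] /=; first by exists 0%N.
rewrite in_setU => /orP [/IH [m hm hom]|h]; last by exists k.+1.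
by exists m => //; apply: leqW.
Qed.

Lemma mem_labL k i : i \in lab_L (lab k) -> exists2 m, (m < k)%N & i \in new_layer (lab m).
Proof.
elim: k => [|k IH] /=; first by rewrite in_set0.
rewrite in_setU => /orP [/IH [m hm him]|h]; last by exists k.
by exists m => //; apply: ltnW.
Qed.

Lemma mem_newT o s : o \in new_T s -> exists2 i, i \in new_layer s & o \in new_objs i s.
Proof. by move=> /bigcupP [i hi ho]; exists i. Qed.

Lemma card_labL m : Tk m.+1 != set0 -> (m.+1 <= #|lab_L (lab m.+1)|)%N.
Proof.
elim: m => [|m IH] /set0Pn [o /mem_newT [i hi hoi]].
  by rewrite card_gt0; apply/set0Pn; exists i; rewrite /= in_setU hi orbT.
have hTm : Tk m.+1 != set0.
  move: hoi; rewrite inE => /and3P [_ _ /existsP [o0 /andP [h0 _]]].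
  by apply/set0Pn; exists o0.
have hiL : i \notin lab_L (lab m.+1) by move: hi; rewrite inE => /andP [].
apply: leq_ltn_trans (IH hTm) _; apply: proper_card.
rewrite properE [X in X && _]subsetUl /=; apply/subsetPn; exists i => //.
by rewrite in_setU hi orbT.
Qed.

Lemma Tk_nlab : Tk (nlab I) = set0.
Proof.
apply/eqP/negPn/negP => /card_labL hc.
by have := leq_trans hc (max_card _); rewrite ltnn.
Qed.

Lemma Otil_i_sub i : Otil_i pref Oc P i \subset Obar :\: Oc.
Proof.
apply/subsetP => o /bigcupP [k hk hi]; rewrite in_setD.
have ho := hi; move: hi; rewrite inE => /and3P [hnT _ _].
apply/andP; split; first by apply: contra hnT; apply/subsetP/(labT_mono (leq0n k)).
by apply: (subsetP (newT_sub_Obar (ltn_ord k))); apply/bigcupP; exists i.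
Qed.

Lemma Obar_empty : Oc = set0 -> Obar = set0.
Proof.
move=> h0.
suff : forall k, lab_T (lab k) = set0 /\ Tk k = set0 by move=> /(_ (nlab I)) [].
elim => [|k [IH1 IH2]] /=; first by rewrite /Tk /= h0.
suff hn : new_T (lab k) = set0 by rewrite /Tk /= IH1 hn setU0.
apply/eqP; rewrite -subset0; apply/subsetP => o /mem_newT [i].
rewrite inE => /andP [_ /existsP [o0 /andP [+ _]]].
by rewrite -[lab_last _]/(Tk k) IH2 in_set0.
Qed.

End Labeling.

Lemma pointed_best (R : realType) (I O : finType) (pref : I -> rel O) (Oc : {set O})
  (P : I -> O -> R) i o : o \in Aset pref Oc P i ->
  o \in Obar pref Oc P /\ forall b, b \in Obar pref Oc P -> pref i o b.
Proof.
rewrite inE => /andP [+ _]; rewrite inE => /andP [h1 /forall_inP h2].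
by split => // b /h2.
Qed.

Section Market.
Variables (R : realType) (I O : finType) (pref : I -> rel O).
Hypothesis Ht : forall i, transitive_pref (pref i).

Definition holdings_dominate (Oc : {set O}) (P : I -> O -> R) :=
  forall k o, 0 < P k o -> forall b, b \in Obar pref Oc P -> pref k o b.

Variables (Oc : {set O}) (P : I -> O -> R).

Lemma labeled_by_indiff m k b o : (m < nlab I)%N ->
  k \in new_layer pref P (lab pref Oc P m) -> b \in Tk pref Oc P m ->
  indiff pref k b o -> 0 < P k o -> o \in Obar pref Oc P.
Proof.
move=> hm hk hb hind hp.
have [h|h] := boolP (o \in lab_T (lab pref Oc P m)).
  exact: (subsetP (labT_sub_Obar _ _ _ (ltnW hm))).
apply: (subsetP (newT_sub_Obar _ _ _ hm)); apply/bigcupP; exists k => //.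
by rewrite inE h hp /=; apply/existsP; exists b; rewrite hb.
Qed.

Lemma held_off_market_better k o b : holdings_dominate Oc P -> 0 < P k o ->
  o \notin Obar pref Oc P -> b \in Obar pref Oc P -> ~~ pref k b o.
Proof.
move=> Hdom hp hnot hb; apply/negP => hbo.
have hob := Hdom _ _ hp.
have [m hm hbm] := mem_labT hb.
have hmn : (m < nlab I)%N.
  rewrite ltn_neqAle hm andbT; apply/eqP => e.
  by move: hbm; rewrite e Tk_nlab in_set0.
have [hkL|hkL] := boolP (k \in lab_L (lab pref Oc P m)).
  (* k was labeled in an earlier round m', through objects o1 ~_k o1' *)
  have [m' hm' hk'] := mem_labL hkL; have hk'2 := hk'.
  move: hk'; rewrite inE => /andP [_ /exists_inP [o1 ho1]].
  move=> /exists_inP [o1' _ /andP [hp1 hind1]].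
  have hmn' : (m' < nlab I)%N := ltn_trans hm' hmn.
  have ho1' := labeled_by_indiff hmn' hk'2 ho1 hind1 hp1.
  move: hind1 => /andP [h11 h12].
  have h1o : pref k o1' o := Ht (Hdom _ _ hp1 _ hb) hbo.
  have hind : indiff pref k o1 o.
    by apply/andP; split; [exact: Ht h11 h1o | exact: Ht (hob _ ho1') h12].
  by move: hnot; rewrite (labeled_by_indiff hmn' hk'2 ho1 hind hp).
(* otherwise k is labeled in round m+1 through b ~_k o *)
have hind : indiff pref k b o by rewrite /indiff hbo (hob _ hb).
have hnl : k \in new_layer pref P (lab pref Oc P m).
  rewrite inE hkL /=; apply/exists_inP; exists b => //; apply/exists_inP; exists o.
    by rewrite inE; apply: contra hnot; apply/subsetP/labT_sub_Obar/ltnW.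
  by rewrite hp hind.
by move: hnot; rewrite (labeled_by_indiff hmn hnl hbm hind hp).
Qed.

Lemma Obar_shrinks (Oc' : {set O}) (P' : I -> O -> R) :
  Oc' \subset Oc -> (forall k o, 0 < P' k o -> 0 < P k o \/ o \in Obar pref Oc P) ->
  holdings_dominate Oc P -> Obar pref Oc' P' \subset Obar pref Oc P.
Proof.
move=> hsub hsupp Hdom.
suff : forall m, lab_T (lab pref Oc' P' m) \subset Obar pref Oc P by apply.
elim => [|m IH]; first exact: subset_trans hsub (Oc_sub_Obar _ _ _).
rewrite /= subUset IH /=; apply/subsetP => o /mem_newT [k _].
rewrite inE => /and3P [_ hp /exists_inP [b hb /andP [hbo _]]].
have hbO : b \in Obar pref Oc P by apply/(subsetP IH)/(subsetP (Tk_sub_labT _ _ _ _)).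
case: (hsupp k o hp) => [hp0|//].
by apply/negPn/negP => /(held_off_market_better Hdom hp0)/(_ hbO); rewrite hbo.
Qed.

End Market.

Section Sums.
Variables (R : realType) (O : finType).

Lemma sum_mask (S X : {set O}) (f : O -> R) :
  S \subset X -> \sum_(o in X) (if o \in S then f o else 0) = \sum_(o in S) f o.
Proof.
move=> hsub; rewrite big_mkcond [RHS]big_mkcond; apply: eq_bigr => o _.
by case: (boolP (o \in S)) => h; [rewrite (subsetP hsub _ h) | case: (o \in X)].
Qed.

Lemma sum_on_support (Y X : {set O}) (F : O -> R) :
  Y \subset X -> (forall o, o \in X -> o \notin Y -> F o = 0) ->
  \sum_(o in X) F o = \sum_(o in Y) F o.
Proof.
move=> hs h; rewrite -(sum_mask _ hs); apply: eq_bigr => o ho.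
by case: ifP => // hy; rewrite h // hy.
Qed.

Lemma sum_subset_le (Y X : {set O}) (F : O -> R) :
  Y \subset X -> (forall o, 0 <= F o) -> \sum_(o in Y) F o <= \sum_(o in X) F o.
Proof. by move=> hs h; rewrite -(sum_mask _ hs); apply: ler_sum => o _; case: ifP. Qed.

Lemma sum_le_eq (a b : O -> R) : (forall o, a o <= b o) ->
  \sum_o b o <= \sum_o a o -> forall o, a o = b o.
Proof.
move=> hab hsum o; have hge o' : true -> 0 <= b o' - a o' by rewrite subr_ge0.
have h0 : \sum_o' (b o' - a o') = 0.
  by apply/eqP; rewrite eq_le sumr_ge0 // andbT sumrB subr_le0.
by apply/eqP; rewrite eq_sym -subr_eq0; apply/eqP/(psumr_eq0P hge h0).
Qed.

End Sums.

Section StochasticDominance.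
Variables (R : realType) (I O : finType) (pref : I -> rel O).
Hypothesis Hc : forall i, complete_pref (pref i).
Hypothesis Ht : forall i, transitive_pref (pref i).

Lemma pref_refl i a : pref i a a.
Proof. by have := Hc i a a; rewrite orbb. Qed.

Definition upward_closed i (S : {set O}) := forall a b, a \in S -> pref i b a -> b \in S.

Definition upper_contour i o := [set o' | pref i o' o].

Lemma upper_contour_closed i o : upward_closed i (upper_contour i o).
Proof. by move=> a b; rewrite !inE => ha hba; apply: Ht hba ha. Qed.

Lemma upper_sumE i (l : O -> R) o : upper_sum pref i l o = \sum_(o' in upper_contour i o) l o'.
Proof. by apply: eq_bigl => o'; rewrite inE. Qed.

(* sd-dominance for i compares the masses of every upward closed set of objects:
   a nonempty such set is the upper contour set of its ≿_i-least element. *)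
Lemma sd_upper_set i (l l' : O -> R) (S : {set O}) : sd_geq pref i l l' ->
  upward_closed i S -> \sum_(o in S) l' o <= \sum_(o in S) l o.
Proof.
move=> hsd hup.
have [->|[m0 hm0]] := set_0Vmem S; first by rewrite !big_set0.
pose rank o := #|[set y | pref i o y]|.
case: (@arg_minnP _ m0 (mem S) rank hm0) => m hmS hmin.
have eS : forall o, (o \in S) = pref i o m.
  move=> o; apply/idP/idP => [ho|]; last exact: hup.
  apply/negPn/negP => hn.
  have hmo : pref i m o by have := Hc i o m; rewrite (negbTE hn).
  have := hmin o ho; rewrite leqNgt => /negP; apply; apply: proper_card.
  rewrite properE; apply/andP; split.
    by apply/subsetP => y; rewrite !inE; apply: Ht hmo.
  by apply/subsetP => /(_ m); rewrite !inE pref_refl (negbTE hn) => /(_ isT).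
rewrite !(eq_bigl _ _ eS); exact: hsd m.
Qed.

End StochasticDominance.

Section Run.
Variables (R : realType) (I O : finType) (pref : I -> rel O).
Variables (om p : nat -> I -> O -> R) (lam beta gam : nat -> I -> O -> R).
Variables (xI : nat -> I -> R) (xO : nat -> O -> R) (D : nat).
Hypothesis Hc : forall i, complete_pref (pref i).
Hypothesis Ht : forall i, transitive_pref (pref i).
Hypothesis HOI : #|O| = #|I|.
Hypothesis Hom0 : forall i o, om 0%N i o = (#|I|%:R)^-1.
Hypothesis Hrun : fttc_run pref om p lam beta gam xI xO D.
Hypothesis HE : run_EEET pref om p lam D.

Local Notation Orem d := (Oset om d).
Local Notation Omkt d := (Obar pref (Oset om d) (p d)).
Local Notation Iact d := (Iact pref (Oset om d) (om d) (p d)).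
Local Notation Otil_i d := (Otil_i pref (Oset om d) (p d)).

Lemma p_init i o : p 0%N i o = 0. Proof. by case: Hrun. Qed.

Lemma Orem_nonempty d : (d < D)%N -> Orem d != set0.
Proof. by case: Hrun => _ h _ _; apply: h. Qed.

Lemma Orem_D : Orem D = set0. Proof. by case: Hrun. Qed.

Lemma run_step d : (d < D)%N ->
  fttc_step pref (Orem d) (om d) (p d) (lam d.+1) (beta d.+1) (gam d.+1)
            (xI d.+1) (xO d.+1) (om d.+1) (p d.+1).
Proof. by case: Hrun => _ _ _; apply. Qed.

Ltac step_facts hd :=
  have [[lam_ge0 [lam_sum1 [lam_end lam_til]]] [quota [[gam_ge0 [gam_sum1 gam_pt]]
        [[[xI_ge0 [xO_ge0 [xO_flow [xI_flow [cap_end cap_til]]]]] _] [omE pE]]]]] :=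
    run_step hd.

Lemma Orem_sub_Omkt d : Orem d \subset Omkt d. Proof. exact: Oc_sub_Obar. Qed.

Lemma Otil_i_mem d i o : o \in Otil_i d i -> o \in Omkt d /\ o \notin Orem d.
Proof. by move=> /(subsetP (Otil_i_sub _ _ _ _)); rewrite in_setD => /andP []. Qed.

Lemma Orem_shrinks d : Orem d.+1 \subset Orem d.
Proof. by apply/subsetP => x; rewrite /= inE => /andP []. Qed.

Lemma run_nonneg d : (d <= D)%N -> forall i o, 0 <= om d i o /\ 0 <= p d i o.
Proof.
elim: d => [|d IH] hd i o; first by rewrite Hom0 p_init invr_ge0 ler0n lexx.
have [om_ge0 p_ge0] := IH (ltnW hd) i o; step_facts hd; split.
  rewrite omE; case: ifP => hi //; case: ifP => ho //; rewrite subr_ge0.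
  by have [_ hb] := quota i o hi ho; apply: le_trans hb; exact: cap_end.
rewrite pE; case: ifP => hi //; apply: addr_ge0.
  case: ifP => ho; last by rewrite subr0.
  rewrite subr_ge0; apply: cap_til => //; rewrite in_setD.
  by have [-> ->] := Otil_i_mem ho.
by case: ifP => ho //; apply: mulr_ge0; [exact: gam_ge0 | exact: xI_ge0].
Qed.

Lemma endowment_off_Orem d : (d <= D)%N -> forall i o, o \notin Orem d -> om d i o = 0.
Proof.
elim: d => [|d IH] hd i o; first by rewrite /= in_setT.
rewrite /= inE negb_and => /orP [h|h].
  step_facts hd; rewrite omE (negbTE h); case: ifP => // _; exact: IH (ltnW hd) _ _ h.
have hom0 j : true -> 0 <= om d.+1 j o by move=> _; case: (run_nonneg hd j o).
have /eqP hs : \sum_i om d.+1 i o == 0.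
  by rewrite eq_le leNgt (negbTE h) sumr_ge0.
exact: (psumr_eq0P hom0 hs).
Qed.

Lemma supply_pos d o : (d <= D)%N -> o \in Orem d -> 0 < \sum_i om d i o.
Proof.
case: d => [|d] hd /=; last by rewrite inE => /andP [].
move=> _; rewrite (eq_bigr (fun _ => (#|I|%:R)^-1)); last by move=> i _; rewrite Hom0.
have hI : (0 < #|I|)%N by rewrite -HOI; apply/card_gt0P; exists o.
by rewrite sumr_const pmulrn_lgt0 ?invr_gt0 ?ltr0n.
Qed.

Lemma all_active_of_equal d : (d < D)%N -> (forall i j, om d i =1 om d j) ->
  forall k, k \in Iact d.
Proof.
move=> hd heq k; have /set0Pn [o ho] := Orem_nonempty hd.
have [i0 hi0] : exists i0, 0 < om d i0 o.
  apply/existsP; apply: contraTT (supply_pos (ltnW hd) ho) => /existsPn hall.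
  by rewrite -leNgt; apply: sumr_le0 => i _; rewrite leNgt hall.
rewrite in_setU inE; apply/orP; right; rewrite (eq_bigr _ (fun o _ => heq k i0 o)).
apply: lt_le_trans hi0 _; rewrite (bigD1 o) //= lerDl.
by apply: sumr_ge0 => o' _; case: (run_nonneg (ltnW hd) i0 o').
Qed.

(* EEET keeps all endowments equal along the run. *)
Lemma equal_endowments d : (d <= D)%N -> forall i j, om d i =1 om d j.
Proof.
elim: d => [|d IH] hd i j o; first by rewrite !Hom0.
have IH' := IH (ltnW hd); have act := all_active_of_equal hd IH'.
step_facts hd; rewrite !omE !act; case: ifP => // ho.
by rewrite (IH' i j o) (HE hd (act i) (act j) (IH' i j) ho).
Qed.

Lemma all_active d : (d < D)%N -> forall k, k \in Iact d.
Proof. by move=> hd; apply: all_active_of_equal hd (equal_endowments (ltnW hd)). Qed.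

Lemma equal_ratios d : (d < D)%N -> forall i j o, o \in Orem d -> lam d.+1 i o = lam d.+1 j o.
Proof.
move=> hd i j o ho.
exact: (HE hd (all_active hd i) (all_active hd j) (equal_endowments (ltnW hd) i j) ho).
Qed.

Lemma sum_active d (F : I -> R) : (d < D)%N -> \sum_(i in Iact d) F i = \sum_i F i.
Proof. by move=> hd; apply: eq_bigl => i; rewrite all_active. Qed.

Lemma holding_update d k o : (d < D)%N ->
  p d.+1 k o = p d k o - (if o \in Otil_i d k then lam d.+1 k o * xO d.+1 o else 0)
               + (if o \in Omkt d then gam d.+1 k o * xI d.+1 k else 0).
Proof. by move=> hd; step_facts hd; rewrite pE all_active. Qed.

Lemma endowment_update d i o : (d < D)%N ->
  om d.+1 i o = if o \in Orem d then om d i o - lam d.+1 i o * xO d.+1 o else 0.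
Proof. by move=> hd; step_facts hd; rewrite omE all_active. Qed.

Lemma returned_ge0 d k o : (d < D)%N ->
  0 <= (if o \in Otil_i d k then lam d.+1 k o * xO d.+1 o else 0).
Proof.
move=> hd; step_facts hd; case: ifP => // ho; have [hoB _] := Otil_i_mem ho.
by apply: mulr_ge0; [exact: lam_ge0 (all_active hd k) hoB | exact: xO_ge0].
Qed.

Lemma lam_off_Otil_i d i o : (d < D)%N -> o \in Omkt d -> o \notin Orem d ->
  o \notin Otil_i d i -> lam d.+1 i o = 0.
Proof.
move=> hd hB hc ho; step_facts hd; have hi := all_active hd i.
apply/eqP; rewrite eq_le lam_ge0 // andbT leNgt; apply/negP => /(lam_til i o hi).
by rewrite in_setD hB hc (negbTE ho) => /(_ isT).
Qed.

Lemma new_holding_source d k o : (d < D)%N -> 0 < p d.+1 k o ->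
  0 < p d k o \/ (o \in Omkt d /\ 0 < gam d.+1 k o).
Proof.
move=> hd; rewrite holding_update // => h.
have hs := returned_ge0 k o hd; have [_ hp] := run_nonneg (ltnW hd) k o.
have [hpk|hpk] := boolP (0 < p d k o); [by left | right; rewrite -leNgt in hpk].
move: h; case: (boolP (o \in Omkt d)) => hB h; last by lra.
step_facts hd; have hi := all_active hd k.
split => //; rewrite lt_neqAle gam_ge0 // andbT; apply/eqP => e.
by move: h; rewrite -e mul0r; lra.
Qed.

Lemma holding_off_market d k o : (d < D)%N -> o \notin Omkt d -> p d.+1 k o = p d k o.
Proof.
move=> hd hB; rewrite holding_update // (negbTE hB) addr0.
by case: ifP => [/Otil_i_mem [h _]|]; [move: hB; rewrite h | rewrite subr0].
Qed.

Lemma market_invariant d : (d <= D)%N -> holdings_dominate pref (Orem d) (p d) /\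
   ((d < D)%N -> Omkt d.+1 \subset Omkt d).
Proof.
have shrink d' : (d' < D)%N -> holdings_dominate pref (Orem d') (p d') ->
    Omkt d'.+1 \subset Omkt d'.
  move=> hd' Hdom; apply: (Obar_shrinks Ht (Orem_shrinks d')) Hdom => k o.
  by case/(new_holding_source hd') => [|[]]; auto.
elim: d => [|d IH] hd.
  have Hdom0 : holdings_dominate pref (Orem 0) (p 0%N) by move=> k o; rewrite p_init ltxx.
  by split => // hD; apply: shrink.
have [Hdom Hsub] := IH (ltnW hd); have Hm := Hsub hd.
suff Hdom' : holdings_dominate pref (Orem d.+1) (p d.+1) by split => // hD; apply: shrink.
move=> k o hp b /(subsetP Hm) hb.
case: (new_holding_source hd hp) => [hp'|[hoB hg]]; first exact: Hdom hp' _ hb.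
step_facts hd; have [_ hbest] := pointed_best (gam_pt k o (all_active hd k) hoB hg).
exact: hbest.
Qed.

Lemma Omkt_mono d d' : (d <= d')%N -> (d' <= D)%N -> Omkt d' \subset Omkt d.
Proof.
move=> /subnK <-; elim: (d' - d)%N => [|m IH] //= h.
apply: subset_trans (IH (ltnW h)); exact: (market_invariant (ltnW h)).2.
Qed.

Lemma Omkt_D : Omkt D = set0.
Proof. exact/Obar_empty/Orem_D. Qed.

Lemma holding_frozen d d' k o : (d <= d')%N -> (d' <= D)%N -> o \notin Omkt d ->
  p d' k o = p d k o.
Proof.
move=> /subnK <-; elim: (d' - d)%N => [|m IH] //= h hB.
rewrite holding_off_market //; first exact: IH (ltnW h) hB.
by apply: contra hB; apply/subsetP/Omkt_mono/ltnW => //; apply: leq_addl.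
Qed.

Lemma holding_origin d k h : (d <= D)%N -> 0 < p d k h ->
  exists2 d', (d' < d)%N & h \in Omkt d' /\ forall b, b \in Omkt d' -> pref k h b.
Proof.
elim: d => [|d IH] hd hp; first by move: hp; rewrite p_init ltxx.
case: (new_holding_source hd hp) => [hp'|[hB hg]].
  by have [d' h1 h2] := IH (ltnW hd) hp'; exists d' => //; apply: ltnW.
by exists d => //; step_facts hd; exact: pointed_best (gam_pt k h (all_active hd k) hB hg).
Qed.

Lemma held_off_market_better_run d k o b : (d <= D)%N -> 0 < p d k o ->
  o \notin Omkt d -> b \in Omkt d -> ~~ pref k b o.
Proof. by move=> hd; apply/held_off_market_better/(market_invariant hd).1. Qed.

Lemma holding_eq0 d i o : (d <= D)%N -> ~~ (0 < p d i o) -> p d i o = 0.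
Proof.
move=> hd hn; have [_ hp] := run_nonneg hd i o.
by apply/eqP; rewrite eq_le hp andbT leNgt.
Qed.

Lemma sales_split d k : (d < D)%N ->
  \sum_(o in Omkt d) lam d.+1 k o * xO d.+1 o =
  \sum_(o in Orem d) lam d.+1 k o * xO d.+1 o +
  \sum_(o in Otil_i d k) lam d.+1 k o * xO d.+1 o.
Proof.
move=> hd; have hOtiB : Otil_i d k \subset Omkt d by apply/subsetP => o /Otil_i_mem [].
rewrite -(sum_mask _ (Orem_sub_Omkt d)) -(sum_mask _ hOtiB) -big_split /=.
apply: eq_bigr => o hB; case: (boolP (o \in Orem d)) => hc.
  by case: ifP => [/Otil_i_mem [_]|]; [rewrite hc | rewrite addr0].
case: ifP => [_|/negbT ho]; first by rewrite add0r.
by rewrite (lam_off_Otil_i hd hB hc ho) mul0r addr0.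
Qed.

(* Over any superset of the market, agent k gains at step d+1 exactly what she
   sells from her endowment: she receives x_k and gives back the rest. *)
Lemma mass_gain d k (X : {set O}) : (d < D)%N -> Omkt d \subset X ->
  \sum_(o in X) p d.+1 k o =
  \sum_(o in X) p d k o + \sum_(o in Orem d) lam d.+1 k o * xO d.+1 o.
Proof.
move=> hd hX; have hOtiB : Otil_i d k \subset Omkt d by apply/subsetP => o /Otil_i_mem [].
rewrite (eq_bigr _ (fun o _ => holding_update k o hd)) big_split /= sumrB.
rewrite !sum_mask ?(subset_trans hOtiB hX) //.
step_facts hd; have hk := all_active hd k.
rewrite -mulr_suml gam_sum1 // mul1r xI_flow // sales_split //; lra.
Qed.

(* By EEET all agents sell equal amounts from their endowments ... *)
Lemma equal_sales d a b : (d < D)%N ->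
  \sum_(o in Orem d) lam d.+1 a o * xO d.+1 o = \sum_(o in Orem d) lam d.+1 b o * xO d.+1 o.
Proof. by move=> hd; apply: eq_bigr => o ho; rewrite (equal_ratios hd a b ho). Qed.

(* ... hence all agents always hold the same total mass. *)
Lemma equal_total_mass d a b : (d <= D)%N ->
  \sum_(o in [set: O]) p d a o = \sum_(o in [set: O]) p d b o.
Proof.
elim: d => [|d IH] hd; first by rewrite !big1 // => o _; rewrite p_init.
by rewrite !mass_gain ?subsetT // (IH (ltnW hd)) (equal_sales a b hd).
Qed.

Lemma returned_total d o : (d < D)%N ->
  \sum_i (if o \in Otil_i d i then lam d.+1 i o * xO d.+1 o else 0) =
  if (o \in Omkt d) && (o \notin Orem d) then xO d.+1 o else 0.
Proof.
move=> hd; case: (boolP (o \in Omkt d)) => hB /=; last first.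
  by apply: big1 => i _; case: ifP => // /Otil_i_mem []; rewrite (negbTE hB).
case: (boolP (o \in Orem d)) => hc /=.
  by apply: big1 => i _; case: ifP => // /Otil_i_mem [_]; rewrite hc.
step_facts hd.
rewrite -[RHS]mul1r -(lam_sum1 o hB) sum_active // mulr_suml; apply: eq_bigr => i _.
by case: ifP => // /negbT ho; rewrite (lam_off_Otil_i hd hB hc ho) mul0r.
Qed.

Lemma received_total d o : (d < D)%N ->
  \sum_i (if o \in Omkt d then gam d.+1 i o * xI d.+1 i else 0) =
  if o \in Omkt d then xO d.+1 o else 0.
Proof.
move=> hd; case: ifP => hB; last by rewrite big1_eq.
by step_facts hd; rewrite xO_flow // sum_active.
Qed.

Lemma conservation d o : (d <= D)%N ->
  \sum_i p d i o + \sum_i om d i o = \sum_i om 0%N i o.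
Proof.
elim: d => [|d IH] hd; first by rewrite big1 ?add0r // => i _; rewrite p_init.
rewrite -(IH (ltnW hd)) (eq_bigr _ (fun i _ => holding_update i o hd)).
rewrite (eq_bigr _ (fun i _ => endowment_update i o hd)).
rewrite big_split sumrB /= returned_total // received_total //.
case: (boolP (o \in Orem d)) => hc; last first.
  have hz : \sum_i om d i o = 0.
    by apply: big1 => i _; exact: endowment_off_Orem (ltnW hd) _ _ hc.
  by rewrite big1_eq hz; case: (o \in Omkt d) => /=; lra.
have hB := subsetP (Orem_sub_Omkt d) _ hc.
step_facts hd.
rewrite hB /= sumrB -mulr_suml -(sum_active (fun i => lam d.+1 i o) hd) lam_sum1 // mul1r.
lra.
Qed.

Definition above_market i d := [set o | [forall b in Omkt d, ~~ pref i b o]].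

Lemma above_market_off i d o : o \in above_market i d -> o \notin Omkt d.
Proof.
rewrite inE => /forall_inP h; apply/negP => hb.
by have := h o hb; rewrite (pref_refl Hc).
Qed.

Lemma above_market_closed i d : upward_closed pref i (above_market i d).
Proof.
move=> a b; rewrite !inE => /forall_inP h hba; apply/forall_inP => c hc.
by apply: contra (h c hc) => hcb; apply: Ht hcb hba.
Qed.

(* i's final holdings above the market of step d were all acquired before d. *)
Lemma holding_above_market i d : (d <= D)%N ->
  \sum_(o in above_market i d) p D i o = \sum_(o in ~: Omkt d) p d i o.
Proof.
move=> hd; have hsub : above_market i d \subset ~: Omkt d.
  by apply/subsetP => o /above_market_off; rewrite in_setC.
rewrite (eq_bigr (p d i)); last by move=> o /above_market_off; apply: holding_frozen.
symmetry; apply: sum_on_support hsub _ => o; rewrite inE => hB hV.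
apply: (holding_eq0 hd); apply: contra hV => hpos; rewrite inE.
by apply/forall_inP => b; apply: held_off_market_better_run hd hpos hB.
Qed.

Lemma mass_above_market d : (d <= D)%N ->
  \sum_i \sum_(o in above_market i d) p D i o = \sum_(o in ~: Omkt d) \sum_i om 0%N i o.
Proof.
move=> hd; rewrite (eq_bigr _ (fun i _ => holding_above_market i hd)) exchange_big /=.
apply: eq_bigr => o; rewrite inE => hB.
rewrite -(conservation o hd) [X in _ + X]big1 ?addr0 // => i _.
by apply: endowment_off_Orem hd _ _ _; apply: contra hB; apply/subsetP/Orem_sub_Omkt.
Qed.

Lemma dominated_above_market (P' : I -> O -> R) d :
  is_assignment (fun o => \sum_i om 0%N i o) P' ->
  (forall i, sd_geq pref i (P' i) (p D i)) -> (d <= D)%N ->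
  forall i, \sum_(o in above_market i d) p D i o = \sum_(o in above_market i d) P' i o.
Proof.
move=> [P'_ge0 [P'_col _]] hdom hd; apply: sum_le_eq => [i|].
  exact: (sd_upper_set Hc Ht (hdom i) (@above_market_closed i d)).
rewrite mass_above_market //; apply: le_trans (_ : \sum_i \sum_(o in ~: Omkt d) P' i o <= _).
  apply: ler_sum => i _; apply: sum_subset_le (P'_ge0 i).
  by apply/subsetP => o /above_market_off; rewrite in_setC.
by rewrite exchange_big; apply: ler_sum => o _; exact: P'_col.
Qed.

(* Each upper contour set of i lies above the market of the first step d whose
   market avoids it, and everything i holds above that market lies in it:
   objects obtained earlier were best on a market meeting the contour set. *)
Lemma upper_contour_covered i o : exists2 d, (d <= D)%N &
  upper_contour pref i o \subset above_market i d /\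
  forall h, h \in above_market i d -> h \notin upper_contour pref i o -> p D i h = 0.
Proof.
pose S := upper_contour pref i o.
have hex : exists d, (d <= D)%N && [forall s in S, s \notin Omkt d].
  by exists D; rewrite leqnn /=; apply/forall_inP => s _; rewrite Omkt_D in_set0.
case: (ex_minnP hex) => d /andP [hd /forall_inP hdisj] hmin; exists d => //; split.
  apply/subsetP => o' ho'; rewrite inE; apply/forall_inP => b hb; apply/negP => hbo.
  by have := hdisj b (upper_contour_closed Ht ho' hbo); rewrite hb.
move=> h hV hnS; apply: holding_eq0 (leqnn D) _; apply/negP => hpos.
have hpos' : 0 < p d i h by rewrite -(holding_frozen i hd (leqnn D) (above_market_off hV)).
have [d' hd' [_ hbest]] := holding_origin hd hpos'.
have /forall_inPn [s hs] : ~~ [forall s in S, s \notin Omkt d'].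
  apply/negP => hf; have := hmin d'; rewrite (leq_trans (ltnW hd') hd) hf leqNgt hd'.
  by move=> /(_ isT).
rewrite negbK => hsB; move/negP: hnS; apply.
exact: (upper_contour_closed Ht hs (hbest s hsB)).
Qed.

(* Efficiency: a dominating assignment gives agent i on every upper contour set at
   most the mass p(D) gives her above the covering market. *)
Lemma outcome_sd_efficient : sd_efficient pref (fun o => \sum_i om 0%N i o) (p D).
Proof.
move=> [P' [hP' [hdom [j [_ [o0 hlt]]]]]].
suff hle i o : upper_sum pref i (P' i) o <= upper_sum pref i (p D i) o.
  by move: hlt; rewrite ltNge hle.
have [d hd [hSV hvan]] := upper_contour_covered i o.
have [P'_ge0 _] := hP'.
rewrite !upper_sumE; apply: le_trans (sum_subset_le hSV (P'_ge0 i)) _.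
by rewrite -(dominated_above_market hP' hdom hd) (sum_on_support hSV).
Qed.

(* While the market meets a set S that is upward closed for agent a, she gains
   nothing outside S: whatever she points to is preferred to the market. *)
Lemma no_gain_below d a (S : {set O}) : (d < D)%N -> upward_closed pref a S ->
  (exists2 s, s \in S & s \in Omkt d) ->
  \sum_(x in ~: S) p d.+1 a x <= \sum_(x in ~: S) p d a x.
Proof.
move=> hd hup [s hs hsB]; apply: ler_sum => x hx.
rewrite holding_update //; have := returned_ge0 a x hd.
case: (boolP (x \in Omkt d)) => hxB; last by lra.
suff -> : gam d.+1 a x = 0 by rewrite mul0r; lra.
step_facts hd; have ha := all_active hd a.
apply/eqP; rewrite eq_le gam_ge0 // andbT leNgt; apply/negP => hg.
have [_ hbest] := pointed_best (gam_pt a x ha hxB hg).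
by move: hx; rewrite in_setC (hup _ _ hs (hbest s hsB)).
Qed.

Lemma mass_below_invariant a b (S : {set O}) : upward_closed pref a S ->
  forall d, (d <= D)%N ->
  \sum_(x in ~: S) p d a x <= \sum_(x in ~: S) p d b x /\
  ((exists2 s, s \in S & s \in Omkt d) -> \sum_(x in ~: S) p d a x <= 0).
Proof.
move=> hup; elim => [|d IH] hd.
  by rewrite !big1 // => x _; rewrite p_init.
have [IH1 IH2] := IH (ltnW hd).
have hb : 0 <= \sum_(x in ~: S) p d.+1 b x.
  by apply: sumr_ge0 => x _; case: (run_nonneg hd b x).
case: (boolP [exists s in S, s \in Omkt d]) => [/exists_inP [s hs hsB]|/exists_inPn hF].
  have := no_gain_below hd hup (ex_intro2 _ _ s hs hsB).
  have := IH2 (ex_intro2 _ _ s hs hsB); split; lra.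
have hBN : Omkt d \subset ~: S.
  by apply/subsetP => x hx; rewrite in_setC; apply: contraL hx; apply: hF.
rewrite !mass_gain // (equal_sales a b hd); split; first lra.
move=> [s hs /(subsetP (Omkt_mono (leqnSn d) hd))].
by have := hF s hs => /negbTE ->.
Qed.

(* Envy-freeness: equal total masses and less mass of a than of b below each of
   a's upper contour sets. *)
Lemma outcome_envy_free : envy_free pref (p D).
Proof.
move=> a b o; rewrite !upper_sumE; set S := upper_contour pref a o.
have [hbelow _] := mass_below_invariant b (upper_contour_closed (i:=a) (o:=o) Ht) (leqnn D).
have split_mass k : \sum_(x in [set: O]) p D k x =
    \sum_(x in S) p D k x + \sum_(x in ~: S) p D k x.
  by rewrite (big_setID S) setTI setTD.
by have := equal_total_mass a b (leqnn D); rewrite !split_mass; lra.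
Qed.

End Run.

Theorem mainTheorem6 (R : realType) (I O : finType) (pref : I -> rel O)
    (om p : nat -> I -> O -> R) (lam beta gam : nat -> I -> O -> R)
    (xI : nat -> I -> R) (xO : nat -> O -> R) (D : nat) :
  (forall i, complete_pref (pref i)) ->
  (forall i, transitive_pref (pref i)) ->
  #|O| = #|I| ->
  (forall i o, om 0%N i o = (#|I|%:R)^-1) ->
  fttc_run pref om p lam beta gam xI xO D ->
  run_EEET pref om p lam D ->
  sd_efficient pref (fun o => \sum_i om 0%N i o) (p D) /\ envy_free pref (p D).
Proof.
move=> Hc Ht HOI Hom0 Hrun HE; split.
  exact: (outcome_sd_efficient Hc Ht HOI Hom0 Hrun HE).
exact: (outcome_envy_free Ht HOI Hom0 Hrun HE).
Qed.
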